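(* Let $K \ge 1$ be the number of groups, let $c_1,\dots,c_K>0$ be per-sample costs, let $B>0$ be a budget, and let $s>0$ be a step size. For each group $k$, let $M_k:\mathbb{R}_+^K\to\mathbb{R}$ be a (differentiable) learning curve that is concave and increasing, and let the utility of an allocation $\vec n=(n_1,\dots,n_K)\in\mathbb{R}_+^K$ be linear in the group-level performances: $U(\vec n)=\sum_{k=1}^K a_k M_k(\vec n)$ with weights $a_k\ge 0$. Suppose the partial derivatives of the learning curves have no cross-group effects, i.e. for every $j\in\{1,\dots,K\}$ and all $\vec p,\vec q\in\mathbb{R}_+^K$ with $p_j=q_j$, $$\frac{\partial M_k(\vec p)}{\partial n_j}=\frac{\partial M_k(\vec q)}{\partial n_j}\quad\text{for all }1\le k\le K.$$ Consider the greedy algorithm: initialize $\vec n=0$; while $\sum_{k=1}^K c_k n_k< B$, choose $$i^*\in\operatorname{argmax}_{1\le i\le K}\ \sum_{k=1}^K a_k M_k\!\left(\vec n+\tfrac{s}{c_i}\mathbf{1}_i\right),$$ where $\mathbf{1}_i$ is the $i$-th standard basis vector, and update $n_{i^*}\leftarrow n_{i^*}+\tfrac{s}{c_{i^*}}$. Then the allocation produced by the greedy algorithm maximizes $U$ over all feasible allocations $\vec n$ (i.e. those with $\sum_{k=1}^K c_k n_k\le B$) in which each $n_k$ is a nonnegative integer multiple of $\tfrac{s}{c_k}$.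
   Context: A model builder allocates a data-collection budget $B$ across $K$ groups; an allocation $\vec n\in\mathbb{R}_+^K$ specifies how many training samples are collected from each group, and collecting one sample from group $k$ costs $c_k$, so the budget constraint is $\sum_k c_k n_k\le B$. The learning curve $M_k(\vec n)$ is the expected model performance on group $k$ when the model is trained on a dataset with allocation $\vec n$. Each step of the greedy algorithm spends $s$ units of budget, buying $s/c_i$ samples from the chosen group $i$. *)

From HB Require Import structures.
From mathcomp Require Import all_boot all_order all_algebra.
From mathcomp Require Import all_classical all_reals all_analysis.
Set Implicit Arguments. Unset Strict Implicit. Unset Printing Implicit Defensive.
Import Order.TTheory GRing.Theory Num.Theory numFieldNormedType.Exports.
Local Open Scope ring_scope.

Section AllocDefs.
Context {R : realType} {K : nat}.

Definition basis_vec (i : 'I_K) : 'rV[R]_K := delta_mx 0 i.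

Definition nonneg_vec (p : 'rV[R]_K) : Prop := forall k, 0 <= p 0 k.

Definition cost (c : 'I_K -> R) (n : 'rV[R]_K) : R := \sum_k c k * n 0 k.

Definition concave_on_orthant (M : 'rV[R]_K -> R) : Prop :=
  forall p q (t : R), nonneg_vec p -> nonneg_vec q -> 0 <= t <= 1 ->
    t * M p + (1 - t) * M q <= M (t *: p + (1 - t) *: q).

Definition increasing_on_orthant (M : 'rV[R]_K -> R) : Prop :=
  forall p q : 'rV[R]_K, nonneg_vec p -> (forall k, p 0 k <= q 0 k) -> M p <= M q.

Definition utility (a : 'I_K -> R) (M : 'I_K -> 'rV[R]_K -> R) (n : 'rV[R]_K) : R :=
  \sum_k a k * M k n.

Definition step (c : 'I_K -> R) (s : R) (i : 'I_K) : 'rV[R]_K := (s / c i) *: basis_vec i.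

Definition alloc (c : 'I_K -> R) (s : R) (l : seq 'I_K) : 'rV[R]_K :=
  \sum_(i <- l) step c s i.

(* l is a complete run of the greedy algorithm (with any tie-breaking):
   each choice is made while the budget is not exhausted and maximizes
   U(n + s/c_i 1_i) over i; the loop stops once cost >= B. *)
Definition greedy_run (a : 'I_K -> R) (M : 'I_K -> 'rV[R]_K -> R)
  (c : 'I_K -> R) (B s : R) (l : seq 'I_K) : Prop :=
  (forall l1 i l2, l = l1 ++ i :: l2 ->
     cost c (alloc c s l1) < B /\
     forall j, utility a M (alloc c s l1 + step c s j)
               <= utility a M (alloc c s l1 + step c s i)) /\
  B <= cost c (alloc c s l).

Definition on_grid (c : 'I_K -> R) (s : R) (n : 'rV[R]_K) : Prop :=
  forall k, exists m : nat, n 0 k = m%:R * (s / c k).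

End AllocDefs.

From HB Require Import structures.
From mathcomp Require Import all_boot all_order all_algebra.
From mathcomp Require Import all_classical all_reals all_analysis.
From mathcomp Require Import lra.
Import Order.TTheory GRing.Theory Num.Theory numFieldNormedType.Exports.
Local Open Scope ring_scope.

(* Since the partial derivatives have no cross-group effects, the mean value
   theorem shows that the gain U(n + (s/c_j) 1_j) - U(n) of one more step in
   group j depends on n only through n_j.  On the grid it is thus a sequence
   d_j(r) of the number r of steps already taken in group j, nonnegative by
   monotonicity and nonincreasing by concavity, and the utility of a grid
   allocation is U(0) plus prefix sums of the d_j.  Let th be the largest gain
   still available when greedy stops: every gain it took is >= th and every
   gain it left is <= th, so trading its steps for those of any allocation
   with no more steps cannot increase the utility.  Every step costs exactly
   s, and greedy stops after the first step reaching the budget, so it never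
   overshoots a budget that is a multiple of s. *)

Lemma is_derive_along (R : realType) (V : normedModType R) (f : V -> R)
    (e p : V) (x : R) :
  derivable f (x *: e + p) e ->
  is_derive x 1 (fun u : R => f (u *: e + p)) ('D_e f (x *: e + p)).
Proof.
move=> df.
have quotE : (fun h : R => h^-1 *:
      (((fun u : R => f (u *: e + p)) \o shift x) (h *: 1) - f (x *: e + p)))
    = (fun h : R => h^-1 *: ((f \o shift (x *: e + p)) (h *: e) - f (x *: e + p))).
  by apply/funext => h /=; rewrite scaler1 scalerDl addrA.
split; first by rewrite /derivable quotE.
by rewrite /derive quotE.
Qed.

Lemma increment_along_eq (R : realType) (V : normedModType R) (f : V -> R)
    (e p q : V) (t : R) : 0 <= t ->
  {in `[0, t], forall u, derivable f (u *: e + p) e} ->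
  {in `[0, t], forall u, derivable f (u *: e + q) e} ->
  {in `[0, t], forall u, 'D_e f (u *: e + p) = 'D_e f (u *: e + q)} ->
  f (t *: e + p) - f p = f (t *: e + q) - f q.
Proof.
move=> t_ge0 dfp dfq dfE.
pose h u := f (u *: e + p) - f (u *: e + q).
have h'0 : {in `[0, t], forall u : R, is_derive u 1 h 0}.
  move=> u u0t; rewrite -(subrr ('D_e f (u *: e + p))) [X in _ - X]dfE //.
  by apply: (@is_deriveB _ R^o R^o); apply: is_derive_along; [apply: dfp|apply: dfq].
have [u _] : exists2 u : R, u \in `[0, t] & h t - h 0 = 0 * (t - 0).
  apply: MVT_segment => // [u|].
    by move=> /subset_itv_oo_cc /h'0.
  by apply: derivable_within_continuous => u /h'0 [].
rewrite mul0r /h !scale0r !add0r; lra.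
Qed.

Lemma coord_increment_eq (R : realType) (K : nat) (f : 'rV[R]_K -> R) (j : 'I_K)
    (p q : 'rV[R]_K) (t : R) :
  (forall x, nonneg_vec x -> derivable f x (basis_vec j)) ->
  (forall x y, nonneg_vec x -> nonneg_vec y -> x 0 j = y 0 j ->
     'D_(basis_vec j) f x = 'D_(basis_vec j) f y) ->
  nonneg_vec p -> nonneg_vec q -> p 0 j = q 0 j -> 0 <= t ->
  f (p + t *: basis_vec j) - f p = f (q + t *: basis_vec j) - f q.
Proof.
move=> df dfE p_ge0 q_ge0 pq t_ge0.
have line_ge0 x u : nonneg_vec x -> u \in `[0, t] -> nonneg_vec (u *: basis_vec j + x).
  move=> x_ge0; rewrite in_itv /= => /andP[u_ge0 _] k.
  by rewrite !mxE addr_ge0 // mulr_ge0.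
rewrite ![_ + t *: _]addrC; apply: increment_along_eq => // u u0t.
- exact/df/line_ge0.
- exact/df/line_ge0.
- by apply: dfE; [apply: line_ge0..|rewrite !mxE !eqxx mulr1 pq].
Qed.

Lemma sum_count_mem {I : finType} (l : seq I) : (\sum_i count_mem i l)%N = size l.
Proof.
elim: l => [|x l IH] /=; first by rewrite big1.
rewrite big_split /= IH (bigD1 x) //= eqxx big1 // => i /negbTE.
by rewrite eq_sym => ->.
Qed.

Lemma exists_seq_count_mem {I : finType} (m : I -> nat) :
  exists l : seq I, forall i, count_mem i l = m i.
Proof.
exists (flatten [seq nseq (m j) j | j <- enum I]) => i.
rewrite count_flatten -map_comp sumnE big_map big_enum /=.
rewrite (bigD1 i) //= count_nseq /= eqxx mul1n big1 ?addn0 // => j /negbTE.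
by rewrite count_nseq /= => ->.
Qed.

Lemma prefix_sum_sub_le (R : realDomainType) (f : nat -> R) (th : R) (y x : nat) :
  (forall r, (r < y)%N -> th <= f r) -> (forall r, (y <= r)%N -> f r <= th) ->
  \sum_(0 <= r < x) f r - \sum_(0 <= r < y) f r <= th * (x%:R - y%:R).
Proof.
move=> f_ge f_le; case: (leqP y x) => [le_yx|lt_xy].
  rewrite (big_cat_nat (leq0n y) le_yx) /= addrAC subrr add0r -natrB //.
  rewrite mulr_natr -sumr_const_nat.
  by apply: ler_sum_nat => r /andP[+ _]; apply: f_le.
rewrite (big_cat_nat (leq0n x) (ltnW lt_xy)) /= opprD addrA subrr add0r.
rewrite -opprB mulrN lerN2 -natrB ?(ltnW lt_xy) // mulr_natr -sumr_const_nat.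
by apply: ler_sum_nat => r /andP[_]; apply: f_ge.
Qed.

Section GreedyExchange.
Context {R : realDomainType} {I : finType} (d : I -> nat -> R).

Definition cumulative_gain (j : I) (m : nat) : R := \sum_(0 <= r < m) d j r.

Lemma cumulative_gain_threshold (th : R) (g m : I -> nat) : 0 <= th ->
  (forall j r, (r < g j)%N -> th <= d j r) ->
  (forall j r, (g j <= r)%N -> d j r <= th) ->
  (\sum_j m j <= \sum_j g j)%N ->
  \sum_j cumulative_gain j (m j) <= \sum_j cumulative_gain j (g j).
Proof.
move=> th_ge0 d_ge d_le le_mg.
have exchange : \sum_j (cumulative_gain j (m j) - cumulative_gain j (g j))
    <= \sum_j th * ((m j)%:R - (g j)%:R).
  by apply: ler_sum => j _; apply: prefix_sum_sub_le; [apply: d_ge|apply: d_le].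
rewrite -mulr_sumr !sumrB -!natr_sum in exchange.
rewrite -subr_le0 (le_trans exchange) // mulr_ge0_le0 //.
by rewrite subr_le0 ler_nat.
Qed.

Definition greedy_choices (l : seq I) : Prop :=
  forall l1 i l2, l = l1 ++ i :: l2 ->
    forall j, d j (count_mem j l1) <= d i (count_mem i l1).

Lemma greedy_choices_rcons l i : greedy_choices (rcons l i) ->
  greedy_choices l /\ forall j, d j (count_mem j l) <= d i (count_mem i l).
Proof.
move=> greedy; split; last by apply: (greedy l i [::]); rewrite cats1.
by move=> l1 i' l2 def_l; apply: (greedy l1 i' (rcons l2 i)); rewrite def_l rcons_cat.
Qed.

Hypothesis d_nonincreasing : forall j, {homo d j : r r' / (r <= r')%N >-> r' <= r}.

Lemma greedy_choices_gain_ge l : greedy_choices l ->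
  forall j x r, (r < count_mem j l)%N -> d x (count_mem x l) <= d j r.
Proof.
elim/last_ind: l => [|l i IH] // /greedy_choices_rcons[greedy_l i_max] j x r.
rewrite -!cats1 !count_cat /= !addn0 => lt_r.
apply: le_trans (d_nonincreasing x _ _ (leq_addr _ _)) _.
case: (ltnP r (count_mem j l)) => [|le_r]; first exact: IH.
move: lt_r le_r; case: (eqVneq i j) => [<-|_]; last by rewrite addn0 ltnNge => /negP.
rewrite addn1 ltnS => ge_r le_r.
by have -> : r = count_mem i l by apply/eqP; rewrite eqn_leq ge_r le_r.
Qed.

Lemma greedy_choices_optimal (i0 : I) (l : seq I) (m : I -> nat) :
  (forall j r, 0 <= d j r) -> greedy_choices l -> (\sum_j m j <= size l)%N ->
  \sum_j cumulative_gain j (m j) <= \sum_j cumulative_gain j (count_mem j l).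
Proof.
move=> d_ge0 greedy le_m.
pose x := [arg max_(i > i0) d i (count_mem i l)]%O.
have x_max j : d j (count_mem j l) <= d x (count_mem x l).
  by rewrite /x; case: arg_maxP => // i _; apply.
apply: (@cumulative_gain_threshold (d x (count_mem x l))) => //.
- by move=> j r; apply: greedy_choices_gain_ge.
- by move=> j r le_r; apply: le_trans (x_max j); apply: d_nonincreasing.
- by rewrite sum_count_mem.
Qed.

End GreedyExchange.

Section Allocation.
Context {R : realType} {K : nat} (c : 'I_K -> R) (s : R).
Hypotheses (c_gt0 : forall k, 0 < c k) (s_gt0 : 0 < s).

Lemma samples_per_step_ge0 k : 0 <= s / c k.
Proof. by rewrite divr_ge0 // ltW. Qed.

Lemma step_coord j k : step c s j 0 k = (j == k)%:R * (s / c j).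
Proof. by rewrite !mxE eqxx eq_sym mulrC. Qed.

Lemma alloc_coord l k : alloc c s l 0 k = (count_mem k l)%:R * (s / c k).
Proof.
elim: l => [|i l IH]; first by rewrite /alloc big_nil mxE mul0r.
rewrite /alloc big_cons mxE -/(alloc c s l) IH step_coord /=.
by case: eqVneq => [->|_]; rewrite ?mul0r ?add0r // natrD mulrDl mul1r.
Qed.

Lemma alloc_nonneg l : nonneg_vec (alloc c s l).
Proof. by move=> k; rewrite alloc_coord mulr_ge0 ?samples_per_step_ge0. Qed.

Lemma step_nonneg j : nonneg_vec (step c s j).
Proof. by move=> k; rewrite step_coord mulr_ge0 ?samples_per_step_ge0. Qed.

Lemma nonneg_vecD {p q : 'rV[R]_K} :
  nonneg_vec p -> nonneg_vec q -> nonneg_vec (p + q).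
Proof. by move=> p_ge0 q_ge0 k; rewrite mxE addr_ge0. Qed.

Lemma alloc_rcons l i : alloc c s (rcons l i) = alloc c s l + step c s i.
Proof. by rewrite /alloc -cats1 big_cat big_seq1. Qed.

Lemma count_mem_rcons (l : seq 'I_K) i j :
  count_mem j (rcons l i) = (count_mem j l + (i == j))%N.
Proof. by rewrite -cats1 count_cat /= addn0. Qed.

Lemma cost_alloc l : cost c (alloc c s l) = (size l)%:R * s.
Proof.
rewrite /cost -sum_count_mem natr_sum mulr_suml; apply: eq_bigr => k _.
by rewrite alloc_coord mulrCA [c k * _]mulrC divfK ?gt_eqF.
Qed.

Lemma on_grid_alloc l : on_grid c s (alloc c s l).
Proof. by move=> k; exists (count_mem k l); apply: alloc_coord. Qed.

Lemma on_grid_eq_alloc n : on_grid c s n -> exists l, n = alloc c s l.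
Proof.
move=> /choice[m nE]; have [l lE] := exists_seq_count_mem m.
by exists l; apply/rowP => k; rewrite alloc_coord lE nE.
Qed.

Lemma greedy_run_cost_le a M B l (m : nat) : greedy_run a M c B s l ->
  B = m%:R * s -> cost c (alloc c s l) <= B.
Proof.
case/lastP: l => [|l i] [run _] B_eq; subst B; rewrite cost_alloc ler_pM2r // ler_nat //.
have [+ _] := run l i [::] (esym (cats1 l i)).
by rewrite cost_alloc ltr_pM2r // ltr_nat size_rcons.
Qed.

Section Utility.
Variables (a : 'I_K -> R) (M : 'I_K -> 'rV[R]_K -> R).
Hypotheses (a_ge0 : forall k, 0 <= a k)
  (M_concave : forall k, concave_on_orthant (M k))
  (M_increasing : forall k, increasing_on_orthant (M k))
  (M_derivable : forall k j p, nonneg_vec p -> derivable (M k) p (basis_vec j))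
  (M_separable : forall j p q, nonneg_vec p -> nonneg_vec q -> p 0 j = q 0 j ->
     forall k, 'D_(basis_vec j) (M k) p = 'D_(basis_vec j) (M k) q).

Local Notation U := (utility a M).

Definition gain j p := U (p + step c s j) - U p.

Definition marginal j r := gain j (alloc c s (nseq r j)).

Lemma gainE j p : gain j p = \sum_k a k * (M k (p + step c s j) - M k p).
Proof. by rewrite /gain /utility -sumrB; apply: eq_bigr => k _; rewrite mulrBr. Qed.

Lemma gain_coord_eq j p q : nonneg_vec p -> nonneg_vec q -> p 0 j = q 0 j ->
  gain j p = gain j q.
Proof.
move=> p_ge0 q_ge0 pq; rewrite !gainE; apply: eq_bigr => k _.
congr (_ * _); apply: coord_increment_eq => //.
- by move=> x; apply: M_derivable.
- by move=> x y x_ge0 y_ge0 xy; apply: M_separable.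
- exact: samples_per_step_ge0.
Qed.

Lemma gain_ge0 j p : nonneg_vec p -> 0 <= gain j p.
Proof.
move=> p_ge0; rewrite gainE sumr_ge0 // => k _; rewrite mulr_ge0 // subr_ge0.
by apply: M_increasing => // i; rewrite mxE lerDl step_nonneg.
Qed.

Lemma gain_step_le j p : nonneg_vec p -> gain j (p + step c s j) <= gain j p.
Proof.
move=> p_ge0; rewrite !gainE; apply: ler_sum => k _; apply: ler_wpM2l => //.
set q := p + step c s j.
have q2_ge0 := nonneg_vecD (nonneg_vecD p_ge0 (step_nonneg j)) (step_nonneg j).
have midpoint : (2^-1 : R) *: p + (1 - 2^-1) *: (q + step c s j) = q.
  by apply/rowP => i; rewrite /q !mxE; lra.
have half_range : 0 <= (2^-1 : R) <= 1 by apply/andP; split; lra.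
have := M_concave k _ _ _ p_ge0 q2_ge0 half_range; rewrite midpoint; lra.
Qed.

Lemma gain_alloc j l : gain j (alloc c s l) = marginal j (count_mem j l).
Proof.
apply: gain_coord_eq; [exact: alloc_nonneg..|].
by rewrite !alloc_coord count_nseq /= eqxx mul1n.
Qed.

Lemma marginal_ge0 j r : 0 <= marginal j r.
Proof. exact/gain_ge0/alloc_nonneg. Qed.

Lemma marginal_nonincreasing j :
  {homo marginal j : r r' / (r <= r')%N >-> r' <= r}.
Proof.
apply: (homo_leq (r := fun x y => y <= x)) => [x|x y z yx zy|r].
- exact: lexx.
- exact: le_trans zy yx.
have -> : marginal j r.+1 = gain j (alloc c s (nseq r j) + step c s j).
  by rewrite -alloc_rcons gain_alloc count_mem_rcons count_nseq /= eqxx mul1n addn1.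
exact/gain_step_le/alloc_nonneg.
Qed.

Lemma utility_alloc l :
  U (alloc c s l) = U 0 + \sum_j cumulative_gain marginal j (count_mem j l).
Proof.
elim/last_ind: l => [|l i IH].
  by rewrite /alloc big_nil big1 ?addr0 // => j _; rewrite /cumulative_gain big_geq.
have -> : U (alloc c s (rcons l i)) = U (alloc c s l) + gain i (alloc c s l).
  by rewrite alloc_rcons /gain [RHS]addrC subrK.
rewrite IH gain_alloc -addrA; congr (_ + _).
rewrite (bigD1 i) //= [in RHS](bigD1 i) //= addrAC; congr (_ + _).
  by rewrite count_mem_rcons eqxx addn1 /cumulative_gain big_nat_recr.
apply: eq_bigr => j /negbTE ne_ji.
by rewrite count_mem_rcons eq_sym ne_ji addn0.
Qed.

Lemma greedy_run_choices B l : greedy_run a M c B s l -> greedy_choices marginal l.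
Proof.
move=> [run _] l1 i l2 def_l j; have [_ i_best] := run l1 i l2 def_l.
by rewrite -!gain_alloc /gain lerD2r.
Qed.

End Utility.
End Allocation.

Theorem theorem4p1 (R : realType) (K : nat) (hK : (0 < K)%N)
  (c : 'I_K -> R) (B s : R) (a : 'I_K -> R) (M : 'I_K -> 'rV[R]_K -> R) :
  (forall k, 0 < c k) -> 0 < B -> 0 < s ->
  (forall k, 0 <= a k) ->
  (forall k, concave_on_orthant (M k)) ->
  (forall k, increasing_on_orthant (M k)) ->
  (forall k j p, nonneg_vec p -> derivable (M k) p (basis_vec j)) ->
  (forall j p q, nonneg_vec p -> nonneg_vec q -> p 0 j = q 0 j ->
     forall k, 'D_(basis_vec j) (M k) p = 'D_(basis_vec j) (M k) q) ->
  forall l : seq 'I_K, greedy_run a M c B s l ->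
    on_grid c s (alloc c s l) /\
    (forall n : 'rV[R]_K, on_grid c s n -> cost c n <= B ->
       utility a M n <= utility a M (alloc c s l)) /\
    ((exists m : nat, B = m%:R * s) -> cost c (alloc c s l) <= B).
Proof.
move=> c_gt0 _ s_gt0 a_ge0 M_concave M_increasing M_derivable M_separable l run.
split; first exact: on_grid_alloc.
split=> [n /on_grid_eq_alloc[l' ->] budget|[m B_eq]]; last first.
  exact: greedy_run_cost_le run B_eq.
rewrite !utility_alloc // lerD2l.
apply: (greedy_choices_optimal _ _ (Ordinal hK)).
- exact: marginal_nonincreasing.
- exact: marginal_ge0.
- exact: greedy_run_choices run.
- have := le_trans budget run.2.
  by rewrite sum_count_mem !cost_alloc // ler_pM2r // ler_nat.
Qed.
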